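(* For $p\ge 1$ let $\Delta_p\subset\mathbf R^2$ be the rectangle with vertices $(0,0),(p,0),(p,1),(0,1)$, let $U_p=\{(a,b,c): a\mu_1+b\mu_2+c>0 \text{ on }\Delta_p\}$, and let $$E_p(a,b,c)=8\pi^2\,\frac{\left(\int_{\partial\Delta_p}(a\mu_1+b\mu_2+c)^{-2}\,d\sigma\right)^2}{\int_{\Delta_p}(a\mu_1+b\mu_2+c)^{-4}\,d\mu},$$ viewed as a function on $U_p/\mathbf R_+$. If $1\le p\le 2$, then $E_p$ has the unique critical point $[(0,0,1)]$. If $p>2$, then $E_p$ has exactly three critical points: $$[(0,0,1)],\qquad \left[\left(\pm1,\,0,\,\tfrac12\left(\tfrac{p^{3/2}}{\sqrt{p-2}}\mp p\right)\right)\right].$$ *)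

From Stdlib Require Import Reals ClassicalEpsilon.
Open Scope R_scope.

(* Value of the Riemann integral of f over [a,b] (0 if not integrable;
   well defined since RiemannInt does not depend on the integrability proof). *)
Definition RInt (f : R -> R) (a b : R) : R :=
  epsilon (inhabits 0)
    (fun l => exists pr : Riemann_integrable f a b, RiemannInt pr = l).

Definition In_U (p a b c : R) : Prop :=
  forall x y, 0 <= x <= p -> 0 <= y <= 1 -> 0 < a * x + b * y + c.

(* Integral over the boundary of Delta_p of (a mu1 + b mu2 + c)^(-2) d sigma:
   sum over the four edges, parametrized by arclength. *)
Definition boundary_int (p a b c : R) : R :=
    RInt (fun t => / (a * t + b * 0 + c) ^ 2) 0 p
  + RInt (fun t => / (a * t + b * 1 + c) ^ 2) 0 p
  + RInt (fun s => / (a * 0 + b * s + c) ^ 2) 0 1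
  + RInt (fun s => / (a * p + b * s + c) ^ 2) 0 1.

Definition area_int (p a b c : R) : R :=
  RInt (fun x => RInt (fun y => / (a * x + b * y + c) ^ 4) 0 1) 0 p.

Definition E (p a b c : R) : R :=
  8 * PI ^ 2 * (boundary_int p a b c) ^ 2 / area_int p a b c.

(* (a,b,c) is a critical point of F : R^3 -> R : F is (Frechet) differentiable
   at (a,b,c) with zero differential. *)
Definition is_critical (F : R -> R -> R -> R) (a b c : R) : Prop :=
  forall eps, 0 < eps -> exists delta, 0 < delta /\
    forall h1 h2 h3, Rabs h1 < delta -> Rabs h2 < delta -> Rabs h3 < delta ->
      Rabs (F (a + h1) (b + h2) (c + h3) - F a b c)
        <= eps * (Rabs h1 + Rabs h2 + Rabs h3).

(* On U_p every integral in E_p is rational in (a, b, c).  Writing the corner values of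
   the affine function as m - u - v, m + u - v, m - u + v, m + u + v (u = a p / 2,
   v = b / 2, m its value at the centre), one finds E_p = 96 pi^2 N^2 / (p Q) with
   N = (p + 1) m^2 + (p - 1) (v^2 - u^2) and Q = 3 m^4 - 2 m^2 (u^2 + v^2) - (u^2 - v^2)^2,
   both positive on U_p.  The v-derivative of N^2 / Q is a positive multiple of v, so
   critical points have b = 0; there the u- and m-derivatives are multiples of
   u ((p - 2) m^2 - p u^2).  Hence either a = 0, or (p - 2) m^2 = p u^2, which has
   solutions only when p > 2, namely 2 m = |a| p^(3/2) / sqrt (p - 2). *)

From Pilot Require Import Defs.
From Stdlib Require Import Reals Lra Psatz ClassicalEpsilon.
From Coquelicot Require Import Coquelicot.
Open Scope R_scope.

Ltac nonzero :=
  repeat split;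
  repeat (apply Rmult_integral_contrapositive_currified || apply pow_nonzero); lra.

(** * The integrals in closed form *)

Lemma RInt_of_is_RInt (f : R -> R) (a b v : R) : is_RInt f a b v -> Defs.RInt f a b = v.
Proof.
  intros Hf.
  pose proof (ex_RInt_Reals_0 f a b (ex_intro _ v Hf)) as pr.
  assert (Hv : RiemannInt pr = v).
  { rewrite <- (RInt_Reals f a b pr). apply is_RInt_unique, Hf. }
  unfold Defs.RInt.
  destruct (epsilon_spec (inhabits 0)
      (fun l => exists pr : Riemann_integrable f a b, RiemannInt pr = l)) as [pr' <-].
  { exists v, pr; exact Hv. }
  rewrite <- Hv. apply RiemannInt_P5.
Qed.

Lemma affine_pos_segment (s d L t : R) :
  0 < d -> 0 < s * L + d -> 0 <= t <= L -> 0 < s * t + d.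
Proof. intros. destruct (Rle_dec 0 s); nra. Qed.

Lemma In_U_corners (p a b c : R) : 0 < p ->
  In_U p a b c <-> 0 < c /\ 0 < a * p + c /\ 0 < c + b /\ 0 < a * p + c + b.
Proof.
  intros Hp. split.
  - intros H.
    pose proof (H 0 0 ltac:(lra) ltac:(lra)). pose proof (H p 0 ltac:(lra) ltac:(lra)).
    pose proof (H 0 1 ltac:(lra) ltac:(lra)). pose proof (H p 1 ltac:(lra) ltac:(lra)).
    repeat split; lra.
  - intros (H1 & H2 & H3 & H4) x y Hx Hy.
    pose proof (affine_pos_segment a c p x H1 H2 Hx).
    pose proof (affine_pos_segment a (c + b) p x H3 ltac:(lra) Hx).
    replace (a * x + b * y + c) with (b * y + (a * x + c)) by ring.
    apply (affine_pos_segment _ _ 1); lra.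
Qed.

Lemma is_RInt_antiderivative (f F : R -> R) (L : R) : 0 <= L ->
  (forall t, 0 <= t <= L -> is_derive F t (f t) /\ ex_derive f t) ->
  is_RInt f 0 L (F L - F 0).
Proof.
  intros HL HF.
  apply (is_RInt_derive F f); intros t Ht;
    rewrite Rmin_left, Rmax_right in Ht by lra; destruct (HF t Ht) as [HFt Hft].
  - exact HFt.
  - apply (ex_derive_continuous f), Hft.
Qed.

Lemma edge_integral (s d L : R) : 0 <= L -> 0 < d -> 0 < s * L + d ->
  is_RInt (fun t => / (s * t + d) ^ 2) 0 L (L / (d * (s * L + d))).
Proof.
  intros HL Hd HdL.
  pose (F t := t / (d * (s * t + d))).
  replace (L / (d * (s * L + d))) with (F L - F 0) by (unfold F; field; lra).
  apply (is_RInt_antiderivative _ F _ HL). intros t Ht. unfold F.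
  pose proof (affine_pos_segment s d L t Hd HdL Ht).
  split; auto_derive; try field; nonzero.
Qed.

Lemma inner_integral (w b : R) : 0 < w -> 0 < w + b ->
  is_RInt (fun y => / (w + b * y) ^ 4) 0 1
    ((3 * w ^ 2 + 3 * w * b + b ^ 2) / (3 * w ^ 3 * (w + b) ^ 3)).
Proof.
  intros Hw Hwb.
  pose (F y := y * (3 * w ^ 2 + 3 * w * b * y + b ^ 2 * y ^ 2) / (3 * w ^ 3 * (w + b * y) ^ 3)).
  replace ((3 * w ^ 2 + 3 * w * b + b ^ 2) / (3 * w ^ 3 * (w + b) ^ 3)) with (F 1 - F 0)
    by (unfold F; field; lra).
  apply (is_RInt_antiderivative _ F); [lra|]. intros y Hy. unfold F.
  pose proof (affine_pos_segment b w 1 y Hw ltac:(lra) Hy).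
  split; auto_derive; try field; nonzero.
Qed.

(* The affine function [a mu1 + b mu2 + c] takes the values [m - u - v], [m + u - v],
   [m - u + v], [m + u + v] at the corners [(0,0)], [(p,0)], [(0,1)], [(p,1)]. *)
Definition hu (p a : R) : R := a * p / 2.
Definition hv (b : R) : R := b / 2.
Definition hm (p a b c : R) : R := c + a * p / 2 + b / 2.

Definition corner_prod (p a b c : R) : R := c * (a * p + c) * (c + b) * (a * p + c + b).

Definition bnd_num (p a b c : R) : R :=
  (p + 1) * hm p a b c ^ 2 + (p - 1) * (hv b ^ 2 - hu p a ^ 2).

Definition area_num (p a b c : R) : R :=
  3 * hm p a b c ^ 4 - 2 * hm p a b c ^ 2 * (hu p a ^ 2 + hv b ^ 2) - (hu p a ^ 2 - hv b ^ 2) ^ 2.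

Lemma boundary_int_closed (p a b c : R) : 0 < p -> In_U p a b c ->
  boundary_int p a b c = 2 * bnd_num p a b c / corner_prod p a b c.
Proof.
  intros Hp HU. apply In_U_corners in HU as (H1 & H2 & H3 & H4); [|exact Hp].
  unfold boundary_int.
  rewrite (RInt_of_is_RInt _ 0 p (p / (c * (a * p + c)))).
  2:{ eapply is_RInt_ext; [|apply (edge_integral a c p); lra]. intros; simpl; f_equal; ring. }
  rewrite (RInt_of_is_RInt _ 0 p (p / ((c + b) * (a * p + (c + b))))).
  2:{ eapply is_RInt_ext; [|apply (edge_integral a (c + b) p); lra]. intros; simpl; f_equal; ring. }
  rewrite (RInt_of_is_RInt _ 0 1 (1 / (c * (b * 1 + c)))).
  2:{ eapply is_RInt_ext; [|apply (edge_integral b c 1); lra]. intros; simpl; f_equal; ring. }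
  rewrite (RInt_of_is_RInt _ 0 1 (1 / ((a * p + c) * (b * 1 + (a * p + c))))).
  2:{ eapply is_RInt_ext; [|apply (edge_integral b (a * p + c) 1); lra].
       intros; simpl; f_equal; ring. }
  unfold bnd_num, corner_prod, hm, hu, hv. field. repeat split; lra.
Qed.

(* [x |-> x * area_num x a b c / (3 * corner_prod x a b c ^ 2)] is the area integral over
   the rectangle of width [x]; its derivative is the inner integral at [mu1 = x]. *)
Lemma area_int_closed (p a b c : R) : 0 < p -> In_U p a b c ->
  area_int p a b c = p * area_num p a b c / (3 * corner_prod p a b c ^ 2).
Proof.
  intros Hp HU. apply In_U_corners in HU as (H1 & H2 & H3 & H4); [|exact Hp].
  pose (F x := x * area_num x a b c / (3 * corner_prod x a b c ^ 2)).
  unfold area_int. apply RInt_of_is_RInt.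
  replace (p * area_num p a b c / (3 * corner_prod p a b c ^ 2)) with (F p - F 0)
    by (unfold F; rewrite Rmult_0_l, Rdiv_0_l; ring).
  apply (is_RInt_ext (fun x => (3 * (a * x + c) ^ 2 + 3 * (a * x + c) * b + b ^ 2)
                               / (3 * (a * x + c) ^ 3 * ((a * x + c) + b) ^ 3))).
  - intros x Hx. rewrite Rmin_left, Rmax_right in Hx by lra.
    pose proof (affine_pos_segment a c p x H1 H2 ltac:(lra)).
    pose proof (affine_pos_segment a (c + b) p x H3 ltac:(lra) ltac:(lra)).
    symmetry. apply RInt_of_is_RInt.
    eapply is_RInt_ext; [|apply (inner_integral (a * x + c) b); lra].
    intros; simpl; f_equal; ring.
  - apply (is_RInt_antiderivative _ F); [lra|]. intros x Hx.
    pose proof (affine_pos_segment a c p x H1 H2 Hx).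
    pose proof (affine_pos_segment a (c + b) p x H3 ltac:(lra) Hx).
    unfold F, area_num, corner_prod, hm, hu, hv.
    split; auto_derive; try field; nonzero.
Qed.

Lemma centre_dominates (p a b c : R) : 0 < p -> In_U p a b c ->
  0 < hm p a b c /\ hu p a ^ 2 + hv b ^ 2 < hm p a b c ^ 2.
Proof.
  intros Hp HU. apply In_U_corners in HU as (H1 & H2 & H3 & H4); [|exact Hp].
  unfold hm, hu, hv. split; [lra|].
  assert (0 < c * (a * p + c + b)) by (apply Rmult_lt_0_compat; lra).
  assert (0 < (a * p + c) * (c + b)) by (apply Rmult_lt_0_compat; lra).
  nra.
Qed.

Lemma area_num_pos (p a b c : R) : 0 < p -> In_U p a b c -> 0 < area_num p a b c.
Proof.
  intros Hp HU. destruct (centre_dominates p a b c Hp HU) as [Hm Hs].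
  unfold area_num. set (u := hu p a) in *. set (v := hv b) in *. set (m := hm p a b c) in *.
  assert ((u ^ 2 - v ^ 2) ^ 2 <= (u ^ 2 + v ^ 2) ^ 2) by nra.
  assert (0 < (3 * m ^ 2 + (u ^ 2 + v ^ 2)) * (m ^ 2 - (u ^ 2 + v ^ 2))) by
    (apply Rmult_lt_0_compat; nra).
  nra.
Qed.

Lemma bnd_num_pos (p a b c : R) : 1 <= p -> In_U p a b c -> 0 < bnd_num p a b c.
Proof.
  intros Hp HU. destruct (centre_dominates p a b c ltac:(lra) HU) as [Hm Hs].
  unfold bnd_num. set (u := hu p a) in *. set (v := hv b) in *. set (m := hm p a b c) in *.
  assert (0 <= (p - 1) * (m ^ 2 - u ^ 2)) by (apply Rmult_le_pos; nra).
  nra.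
Qed.

Lemma corner_prod_pos (p a b c : R) : 0 < p -> In_U p a b c -> 0 < corner_prod p a b c.
Proof.
  intros Hp HU. apply In_U_corners in HU as (H1 & H2 & H3 & H4); [|exact Hp].
  unfold corner_prod. repeat apply Rmult_lt_0_compat; lra.
Qed.

Definition E_closed (p a b c : R) : R := 96 * PI ^ 2 / p * (bnd_num p a b c ^ 2 / area_num p a b c).

Lemma E_eq_closed (p a b c : R) : 0 < p -> In_U p a b c -> E p a b c = E_closed p a b c.
Proof.
  intros Hp HU.
  pose proof (area_num_pos p a b c Hp HU). pose proof (corner_prod_pos p a b c Hp HU).
  unfold E, E_closed. rewrite boundary_int_closed, area_int_closed by assumption.
  field. repeat split; lra.
Qed.

(** * Gradients of functions of three real variables *)

Definition R3 : NormedModule R_AbsRing :=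
  prod_NormedModule R_AbsRing (prod_NormedModule R_AbsRing R_NormedModule R_NormedModule)
    R_NormedModule.

Definition uncurry3 (F : R -> R -> R -> R) (t : R3) : R := F (fst (fst t)) (snd (fst t)) (snd t).

Definition is_gradient (F : R -> R -> R -> R) (a b c g1 g2 g3 : R) : Prop :=
  filterdiff (uncurry3 F) (locally ((a, b), c))
    (fun h : R3 => g1 * fst (fst h) + g2 * snd (fst h) + g3 * snd h).

Section Gradient.

Variables a b c : R.

Lemma is_gradient_var1 : is_gradient (fun x _ _ => x) a b c 1 0 0.
Proof.
  apply filterdiff_ext_lin with (fun t : R3 => fst (fst t)); [|intros; simpl; ring].
  apply filterdiff_linear, (is_linear_comp (fun t : R3 => fst t) fst); apply is_linear_fst.
Qed.

Lemma is_gradient_var2 : is_gradient (fun _ y _ => y) a b c 0 1 0.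
Proof.
  apply filterdiff_ext_lin with (fun t : R3 => snd (fst t)); [|intros; simpl; ring].
  apply filterdiff_linear, (is_linear_comp (fun t : R3 => fst t) snd).
  - apply is_linear_fst.
  - apply is_linear_snd.
Qed.

Lemma is_gradient_var3 : is_gradient (fun _ _ z => z) a b c 0 0 1.
Proof.
  apply filterdiff_ext_lin with (fun t : R3 => snd t); [|intros; simpl; ring].
  apply filterdiff_linear, is_linear_snd.
Qed.

Lemma is_gradient_const (k : R) : is_gradient (fun _ _ _ => k) a b c 0 0 0.
Proof.
  eapply filterdiff_ext_lin; [apply filterdiff_const|]. intros; simpl; unfold zero; simpl; ring.
Qed.

Variables (F G : R -> R -> R -> R) (f1 f2 f3 g1 g2 g3 : R).
Hypothesis HF : is_gradient F a b c f1 f2 f3.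
Hypothesis HG : is_gradient G a b c g1 g2 g3.

Lemma is_gradient_plus : is_gradient (fun x y z => F x y z + G x y z) a b c
  (f1 + g1) (f2 + g2) (f3 + g3).
Proof.
  eapply filterdiff_ext_lin; [apply (filterdiff_plus_fct _ _ _ _ HF HG)|].
  intros; unfold plus; simpl; ring.
Qed.

Lemma is_gradient_mult : is_gradient (fun x y z => F x y z * G x y z) a b c
  (f1 * G a b c + F a b c * g1) (f2 * G a b c + F a b c * g2) (f3 * G a b c + F a b c * g3).
Proof.
  eapply filterdiff_ext_lin.
  - apply (filterdiff_mult_fct (K := R_AbsRing) _ _ _ _ _ Rmult_comm HF HG).
  - intros; unfold plus, mult, uncurry3; simpl; ring.
Qed.

Lemma is_gradient_inv : F a b c <> 0 -> is_gradient (fun x y z => / F x y z) a b c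
  (- f1 / F a b c ^ 2) (- f2 / F a b c ^ 2) (- f3 / F a b c ^ 2).
Proof.
  intros HF0. eapply filterdiff_ext_lin.
  - apply (filterdiff_comp' (uncurry3 F) Rinv _ _ (fun y => scal y (- 1 / F a b c ^ 2)) HF).
    apply (is_derive_inv (fun y => y) (F a b c) 1 (is_derive_id _) HF0).
  - intros; unfold scal; simpl; unfold mult; simpl. field. exact HF0.
Qed.

End Gradient.

Lemma is_gradient_eq (F : R -> R -> R -> R) (a b c g1 g2 g3 h1 h2 h3 : R) :
  is_gradient F a b c g1 g2 g3 -> g1 = h1 -> g2 = h2 -> g3 = h3 -> is_gradient F a b c h1 h2 h3.
Proof. now intros H -> -> ->. Qed.

Lemma is_gradient_ext (F G : R -> R -> R -> R) (a b c g1 g2 g3 : R) :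
  (forall x y z, F x y z = G x y z) ->
  is_gradient F a b c g1 g2 g3 -> is_gradient G a b c g1 g2 g3.
Proof. intros HFG. apply filterdiff_ext. intros t. apply HFG. Qed.

Lemma is_gradient_ext_locally (F G : R -> R -> R -> R) (a b c g1 g2 g3 : R) :
  locally ((a, b), c) (fun t => uncurry3 F t = uncurry3 G t) ->
  is_gradient F a b c g1 g2 g3 -> is_gradient G a b c g1 g2 g3.
Proof. apply (filterdiff_ext_locally (uncurry3 F) (uncurry3 G)). Qed.

Lemma is_gradient_opp (a b c : R) (F : R -> R -> R -> R) (f1 f2 f3 : R) :
  is_gradient F a b c f1 f2 f3 -> is_gradient (fun x y z => - F x y z) a b c (- f1) (- f2) (- f3).
Proof.
  intros HF.
  apply (is_gradient_ext (fun x y z => -1 * F x y z)); [intros; ring|].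
  eapply is_gradient_eq;
    [apply (is_gradient_mult _ _ _ _ _ _ _ _ _ _ _ (is_gradient_const a b c (-1)) HF)|..]; ring.
Qed.

Section GradientDerived.

Variables (a b c : R) (F G : R -> R -> R -> R) (f1 f2 f3 g1 g2 g3 : R).
Hypothesis HF : is_gradient F a b c f1 f2 f3.
Hypothesis HG : is_gradient G a b c g1 g2 g3.

Lemma is_gradient_minus : is_gradient (fun x y z => F x y z - G x y z) a b c
  (f1 - g1) (f2 - g2) (f3 - g3).
Proof.
  apply (is_gradient_ext (fun x y z => F x y z + - G x y z)); [intros; ring|].
  eapply is_gradient_eq;
    [apply (is_gradient_plus _ _ _ _ _ _ _ _ _ _ _ HF (is_gradient_opp _ _ _ _ _ _ _ HG))|..]; ring.
Qed.

Lemma is_gradient_pow (n : nat) : is_gradient (fun x y z => F x y z ^ n) a b c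
  (INR n * F a b c ^ pred n * f1) (INR n * F a b c ^ pred n * f2) (INR n * F a b c ^ pred n * f3).
Proof.
  induction n as [|n IH].
  - eapply is_gradient_eq; [apply (is_gradient_const a b c 1)|..]; simpl; ring.
  - eapply is_gradient_eq; [apply (is_gradient_mult _ _ _ _ _ _ _ _ _ _ _ HF IH)|..];
      rewrite S_INR; destruct n; simpl; ring.
Qed.

Lemma is_gradient_div : G a b c <> 0 -> is_gradient (fun x y z => F x y z / G x y z) a b c
  (f1 / G a b c - F a b c * g1 / G a b c ^ 2) (f2 / G a b c - F a b c * g2 / G a b c ^ 2)
  (f3 / G a b c - F a b c * g3 / G a b c ^ 2).
Proof.
  intros HG0.
  eapply is_gradient_eq;
    [apply (is_gradient_mult _ _ _ _ _ _ _ _ _ _ _ HF (is_gradient_inv _ _ _ _ _ _ _ HG HG0))|..];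
    field; exact HG0.
Qed.

End GradientDerived.

Ltac auto_gradient :=
  lazymatch goal with
  | |- is_gradient (fun _ _ _ => ?k) _ _ _ _ _ _ => apply is_gradient_const
  | |- is_gradient (fun x _ _ => x) _ _ _ _ _ _ => apply is_gradient_var1
  | |- is_gradient (fun _ y _ => y) _ _ _ _ _ _ => apply is_gradient_var2
  | |- is_gradient (fun _ _ z => z) _ _ _ _ _ _ => apply is_gradient_var3
  | |- is_gradient (fun x y z => @?A x y z + @?B x y z) _ _ _ _ _ _ =>
      eapply (is_gradient_plus _ _ _ A B); auto_gradient
  | |- is_gradient (fun x y z => @?A x y z - @?B x y z) _ _ _ _ _ _ =>
      eapply (is_gradient_minus _ _ _ A B); auto_gradient
  | |- is_gradient (fun x y z => @?A x y z * @?B x y z) _ _ _ _ _ _ =>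
      eapply (is_gradient_mult _ _ _ A B); auto_gradient
  | |- is_gradient (fun x y z => - @?A x y z) _ _ _ _ _ _ =>
      eapply (is_gradient_opp _ _ _ A); auto_gradient
  | |- is_gradient (fun x y z => @?A x y z ^ ?n) _ _ _ _ _ _ =>
      eapply (fun HA => is_gradient_pow _ _ _ A _ _ _ HA n); auto_gradient
  | |- is_gradient (fun x y z => @?A x y z / @?B x y z) _ _ _ _ _ _ =>
      eapply (is_gradient_div _ _ _ A B); [auto_gradient|auto_gradient|]
  end.

Lemma norm_R3_le (h : R3) : norm h <= Rabs (fst (fst h)) + Rabs (snd (fst h)) + Rabs (snd h).
Proof.
  assert (Hsum : forall A B, 0 <= A -> 0 <= B -> sqrt (A ^ 2 + B ^ 2) <= A + B).
  { intros A B HA HB. rewrite <- (sqrt_pow2 (A + B)) by lra. apply sqrt_le_1_alt. nra. }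
  destruct h as [[h1 h2] h3]; simpl.
  change (norm ((h1, h2), h3)) with (sqrt (norm (h1, h2) ^ 2 + norm h3 ^ 2)).
  change (norm (h1, h2)) with (sqrt (norm h1 ^ 2 + norm h2 ^ 2)).
  change (norm h1) with (Rabs h1). change (norm h2) with (Rabs h2). change (norm h3) with (Rabs h3).
  eapply Rle_trans; [apply Hsum; [apply sqrt_pos|apply Rabs_pos]|].
  pose proof (Hsum (Rabs h1) (Rabs h2) (Rabs_pos _) (Rabs_pos _)). lra.
Qed.

Lemma is_gradient_approx (F : R -> R -> R -> R) (a b c g1 g2 g3 : R) :
  is_gradient F a b c g1 g2 g3 ->
  forall eps, 0 < eps -> exists d, 0 < d /\ forall h1 h2 h3,
    Rabs h1 < d -> Rabs h2 < d -> Rabs h3 < d ->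
    Rabs (F (a + h1) (b + h2) (c + h3) - F a b c - (g1 * h1 + g2 * h2 + g3 * h3))
      <= eps * (Rabs h1 + Rabs h2 + Rabs h3).
Proof.
  intros [_ Hdom] eps Heps.
  destruct (Hdom ((a, b), c) (fun P HP => HP) (mkposreal eps Heps)) as [d Hd].
  exists d. split; [apply cond_pos|]. intros h1 h2 h3 B1 B2 B3.
  assert (Hball : ball ((a, b), c) d ((a + h1, b + h2), c + h3)).
  { assert (Hb : forall x h : R, Rabs h < d -> ball x d (x + h)).
    { intros x h Hh. unfold ball; simpl; unfold AbsRing_ball, abs, minus, plus, opp; simpl.
      now replace (x + h + - x) with h by ring. }
    split; [split|]; apply Hb; assumption. }
  specialize (Hd _ Hball).
  pose proof (norm_R3_le (minus ((a + h1, b + h2), c + h3) ((a, b), c))) as Hn.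
  unfold minus, plus, opp in Hd, Hn; simpl in Hd, Hn. unfold plus, opp in Hd, Hn; simpl in Hd, Hn.
  replace (a + h1 + - a) with h1 in Hd, Hn by ring.
  replace (b + h2 + - b) with h2 in Hd, Hn by ring.
  replace (c + h3 + - c) with h3 in Hd, Hn by ring.
  change (norm ?z) with (Rabs z) in Hd at 1. unfold uncurry3 in Hd; simpl in Hd.
  eapply Rle_trans; [|apply Rmult_le_compat_l; [lra|exact Hn]].
  eapply Rle_trans; [|exact Hd]. right. reflexivity.
Qed.

Lemma slope_zero (g : R) :
  (forall eps, 0 < eps ->
     exists d, 0 < d /\ forall h, Rabs h < d -> Rabs (g * h) <= eps * Rabs h) ->
  g = 0.
Proof.
  intros Hg. destruct (Req_dec g 0) as [|Hg0]; [assumption|exfalso].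
  pose proof (Rabs_pos_lt g Hg0) as Hpos.
  destruct (Hg (Rabs g / 2) ltac:(lra)) as (d & Hd & Hb).
  assert (Hh : Rabs (d / 2) = d / 2) by (apply Rabs_pos_eq; lra).
  specialize (Hb (d / 2)). rewrite Rabs_mult, Hh in Hb.
  assert (Rabs g * (d / 2) <= Rabs g / 2 * (d / 2)) by (apply Hb; lra).
  nra.
Qed.

Lemma is_critical_gradient_small (F : R -> R -> R -> R) (a b c g1 g2 g3 : R) :
  is_gradient F a b c g1 g2 g3 -> is_critical F a b c ->
  forall eps, 0 < eps -> exists d, 0 < d /\ forall h1 h2 h3,
    Rabs h1 < d -> Rabs h2 < d -> Rabs h3 < d ->
    Rabs (g1 * h1 + g2 * h2 + g3 * h3) <= eps * (Rabs h1 + Rabs h2 + Rabs h3).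
Proof.
  intros HF Hc eps Heps.
  destruct (is_gradient_approx F a b c g1 g2 g3 HF (eps / 2) ltac:(lra)) as (d1 & Hd1 & H1).
  destruct (Hc (eps / 2) ltac:(lra)) as (d2 & Hd2 & H2).
  exists (Rmin d1 d2). split; [now apply Rmin_glb_lt|]. intros h1 h2 h3 B1 B2 B3.
  pose proof (Rmin_l d1 d2). pose proof (Rmin_r d1 d2).
  specialize (H1 h1 h2 h3 ltac:(lra) ltac:(lra) ltac:(lra)).
  specialize (H2 h1 h2 h3 ltac:(lra) ltac:(lra) ltac:(lra)).
  set (D := F (a + h1) (b + h2) (c + h3) - F a b c) in *.
  replace (g1 * h1 + g2 * h2 + g3 * h3) with (D - (D - (g1 * h1 + g2 * h2 + g3 * h3))) by ring.
  pose proof (Rabs_triang D (- (D - (g1 * h1 + g2 * h2 + g3 * h3)))) as Htri.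
  rewrite Rabs_Ropp in Htri. unfold Rminus at 1. lra.
Qed.

Lemma is_critical_iff_gradient_zero (F : R -> R -> R -> R) (a b c g1 g2 g3 : R) :
  is_gradient F a b c g1 g2 g3 -> (is_critical F a b c <-> g1 = 0 /\ g2 = 0 /\ g3 = 0).
Proof.
  intros HF. split.
  - intros Hc. pose proof (is_critical_gradient_small F a b c g1 g2 g3 HF Hc) as Hs.
    repeat split; apply slope_zero; intros eps Heps;
      destruct (Hs eps Heps) as (d & Hd & Hb); exists d; split; try exact Hd; intros h Hh.
    + pose proof (Hb h 0 0 Hh) as H. rewrite Rabs_R0 in H.
      replace (g1 * h + g2 * 0 + g3 * 0) with (g1 * h) in H by ring.
      replace (Rabs h + 0 + 0) with (Rabs h) in H by ring. apply H; lra.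
    + pose proof (Hb 0 h 0) as H. rewrite Rabs_R0 in H.
      replace (g1 * 0 + g2 * h + g3 * 0) with (g2 * h) in H by ring.
      replace (0 + Rabs h + 0) with (Rabs h) in H by ring. apply H; lra.
    + pose proof (Hb 0 0 h) as H. rewrite Rabs_R0 in H.
      replace (g1 * 0 + g2 * 0 + g3 * h) with (g3 * h) in H by ring.
      replace (0 + 0 + Rabs h) with (Rabs h) in H by ring. apply H; lra.
  - intros (-> & -> & ->) eps Heps.
    destruct (is_gradient_approx F a b c 0 0 0 HF eps Heps) as (d & Hd & Hb).
    exists d. split; [exact Hd|]. intros h1 h2 h3 B1 B2 B3.
    specialize (Hb h1 h2 h3 B1 B2 B3).
    now replace (0 * h1 + 0 * h2 + 0 * h3) with 0 in Hb by ring; rewrite Rminus_0_r in Hb.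
Qed.

Lemma is_gradient_pos_locally (F : R -> R -> R -> R) (a b c g1 g2 g3 : R) :
  is_gradient F a b c g1 g2 g3 -> 0 < F a b c ->
  locally ((a, b), c) (fun t => 0 < uncurry3 F t).
Proof.
  intros HF Hpos.
  apply (filterdiff_continuous (uncurry3 F) ((a, b), c)); [eexists; exact HF|].
  now apply open_gt.
Qed.

(** * Critical points of E_p *)

Lemma In_U_locally (p a b c : R) : 0 < p -> In_U p a b c ->
  locally ((a, b), c) (fun t => In_U p (fst (fst t)) (snd (fst t)) (snd t)).
Proof.
  intros Hp HU. apply In_U_corners in HU as (H1 & H2 & H3 & H4); [|exact Hp].
  assert (Hcorner : forall k1 k2, 0 < k1 * a + k2 * b + c ->
            locally ((a, b), c) (fun t => 0 < uncurry3 (fun x y z => k1 * x + k2 * y + z) t)).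
  { intros k1 k2 Hk. eapply is_gradient_pos_locally; [|exact Hk]. auto_gradient. }
  pose proof (Hcorner 0 0 ltac:(lra)) as C1.
  pose proof (Hcorner p 0 ltac:(lra)) as C2.
  pose proof (Hcorner 0 1 ltac:(lra)) as C3.
  pose proof (Hcorner p 1 ltac:(lra)) as C4.
  generalize (filter_and _ _ (filter_and _ _ C1 C2) (filter_and _ _ C3 C4)).
  apply filter_imp. intros [[x y] z]. unfold uncurry3; simpl. intros [[? ?] [? ?]].
  apply In_U_corners; [exact Hp|]. repeat split; lra.
Qed.

Definition crit_u (p a b c : R) : R :=
  let u := hu p a in let v := hv b in let m := hm p a b c in
  4 * u * (bnd_num p a b c * (m ^ 2 + u ^ 2 - v ^ 2) - (p - 1) * area_num p a b c).
Definition crit_v (p a b c : R) : R :=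
  let u := hu p a in let v := hv b in let m := hm p a b c in
  4 * v * ((p - 1) * area_num p a b c + bnd_num p a b c * (m ^ 2 - u ^ 2 + v ^ 2)).
Definition crit_m (p a b c : R) : R :=
  let u := hu p a in let v := hv b in let m := hm p a b c in
  4 * m * ((p + 1) * area_num p a b c - bnd_num p a b c * (3 * m ^ 2 - u ^ 2 - v ^ 2)).

Definition grad_scale (p a b c : R) : R :=
  96 * PI ^ 2 / p * bnd_num p a b c / area_num p a b c ^ 2.

(* [crit_u], [crit_v], [crit_m] are, up to the factor [grad_scale], the derivatives of
   [E_closed] in the centred coordinates [u], [v], [m], combined by the chain rule
   [d/da = p/2 (d/du + d/dm)], [d/db = 1/2 (d/dv + d/dm)], [d/dc = d/dm]. *)
Lemma E_closed_gradient (p a b c : R) : 0 < p -> area_num p a b c <> 0 ->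
  is_gradient (E_closed p) a b c
    (grad_scale p a b c * (p / 2) * (crit_u p a b c + crit_m p a b c))
    (grad_scale p a b c * (1 / 2) * (crit_v p a b c + crit_m p a b c))
    (grad_scale p a b c * crit_m p a b c).
Proof.
  intros Hp Hq. unfold area_num, hm, hu, hv in Hq.
  eapply is_gradient_eq;
    [unfold E_closed, bnd_num, area_num, hm, hu, hv; auto_gradient;
     first [exact Hq | cbv beta; lra]|..];
    unfold grad_scale, crit_u, crit_v, crit_m, bnd_num, area_num, hm, hu, hv.
  all: simpl; field; repeat split; (exact Hq || lra).
Qed.

Lemma E_gradient (p a b c : R) : 1 <= p -> In_U p a b c ->
  is_gradient (E p) a b c
    (grad_scale p a b c * (p / 2) * (crit_u p a b c + crit_m p a b c))
    (grad_scale p a b c * (1 / 2) * (crit_v p a b c + crit_m p a b c))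
    (grad_scale p a b c * crit_m p a b c).
Proof.
  intros Hp HU.
  apply (is_gradient_ext_locally (E_closed p)).
  - generalize (In_U_locally p a b c ltac:(lra) HU). apply filter_imp.
    intros t Ht. symmetry. apply E_eq_closed; [lra|exact Ht].
  - apply E_closed_gradient; [lra|]. apply Rgt_not_eq, (area_num_pos p a b c); [lra|exact HU].
Qed.

Lemma is_critical_E_iff_crit (p a b c : R) : 1 <= p -> In_U p a b c ->
  is_critical (E p) a b c <-> crit_u p a b c = 0 /\ crit_v p a b c = 0 /\ crit_m p a b c = 0.
Proof.
  intros Hp HU. rewrite (is_critical_iff_gradient_zero _ _ _ _ _ _ _ (E_gradient p a b c Hp HU)).
  assert (Hk : 0 < grad_scale p a b c).
  { pose proof (area_num_pos p a b c ltac:(lra) HU). pose proof (bnd_num_pos p a b c Hp HU).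
    pose proof PI_RGT_0. unfold grad_scale.
    apply Rdiv_lt_0_compat; [|apply pow_lt; lra].
    apply Rmult_lt_0_compat; [apply Rdiv_lt_0_compat; [|lra]|lra].
    apply Rmult_lt_0_compat; [lra|apply pow_lt; lra]. }
  split.
  - intros (G1 & G2 & G3).
    assert (Hcancel : forall k x, 0 < k -> k * x = 0 -> x = 0).
    { intros k x Hk0 Hx. apply Rmult_integral in Hx as [|]; lra. }
    apply Hcancel in G1; [|nra]. apply Hcancel in G2; [|nra]. apply Hcancel in G3; [|lra].
    lra.
  - intros (-> & -> & ->). repeat split; ring.
Qed.

Lemma crit_v_zero (p a b c : R) : 1 <= p -> In_U p a b c -> crit_v p a b c = 0 -> b = 0.
Proof.
  intros Hp HU H. destruct (centre_dominates p a b c ltac:(lra) HU) as [Hm Hs].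
  pose proof (area_num_pos p a b c ltac:(lra) HU). pose proof (bnd_num_pos p a b c Hp HU).
  unfold crit_v in H. set (u := hu p a) in *. set (v := hv b) in *. set (m := hm p a b c) in *.
  assert (0 <= (p - 1) * area_num p a b c) by (apply Rmult_le_pos; lra).
  assert (0 < bnd_num p a b c * (m ^ 2 - u ^ 2 + v ^ 2)) by (apply Rmult_lt_0_compat; nra).
  apply Rmult_integral in H as [H|H]; [|lra].
  unfold v, hv in H. lra.
Qed.

Definition balance (p a c : R) : R := (p - 2) * hm p a 0 c ^ 2 - p * hu p a ^ 2.

Lemma crit_u_b0 (p a c : R) : crit_u p a 0 c = - 8 * hu p a * hm p a 0 c ^ 2 * balance p a c.
Proof. unfold crit_u, balance, bnd_num, area_num, hm, hu, hv. field. Qed.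

Lemma crit_v_b0 (p a c : R) : crit_v p a 0 c = 0.
Proof. unfold crit_v, hv. field. Qed.

Lemma crit_m_b0 (p a c : R) : crit_m p a 0 c = 8 * hm p a 0 c * hu p a ^ 2 * balance p a c.
Proof. unfold crit_m, balance, bnd_num, area_num, hm, hu, hv. field. Qed.

Lemma is_critical_E_iff (p a b c : R) : 1 <= p -> In_U p a b c ->
  is_critical (E p) a b c <-> b = 0 /\ (a = 0 \/ balance p a c = 0).
Proof.
  intros Hp HU. rewrite is_critical_E_iff_crit by assumption. split.
  - intros (Hu & Hv & Hm).
    pose proof (crit_v_zero p a b c Hp HU Hv) as ->. split; [reflexivity|].
    destruct (centre_dominates p a 0 c ltac:(lra) HU) as [Hc _].
    destruct (Req_dec a 0) as [Ha|Ha]; [now left|right].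
    rewrite crit_u_b0 in Hu. unfold hu in Hu.
    assert (a * p <> 0) by (apply Rmult_integral_contrapositive_currified; lra).
    pose proof (pow_lt _ 2 Hc).
    repeat (apply Rmult_integral in Hu as [Hu|Hu]); lra.
  - intros (-> & [-> | Hbal]); rewrite crit_u_b0, crit_v_b0, crit_m_b0.
    + unfold hu. repeat split; field.
    + rewrite Hbal. repeat split; ring.
Qed.

Lemma balance_zero_le2 (p a c : R) : 0 < p <= 2 -> balance p a c = 0 -> a = 0.
Proof.
  intros Hp Hbal. unfold balance, hu in Hbal.
  assert (0 <= (2 - p) * hm p a 0 c ^ 2) by (apply Rmult_le_pos; [lra|apply pow2_ge_0]).
  assert (0 <= p * (a * p / 2) ^ 2) by (apply Rmult_le_pos; [lra|apply pow2_ge_0]).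
  assert (Hsq : (a * p / 2) ^ 2 = 0) by nra.
  assert (Hap : a * p = 0) by nra. apply Rmult_integral in Hap as [|]; [assumption|lra].
Qed.

Lemma Rpower_3_2_div_sqrt (p : R) : 2 < p ->
  0 < Rpower p (3 / 2) / sqrt (p - 2) /\ (Rpower p (3 / 2) / sqrt (p - 2)) ^ 2 * (p - 2) = p ^ 3.
Proof.
  intros Hp.
  replace (Rpower p (3 / 2)) with (p * sqrt p)
    by (replace (3 / 2) with (1 + / 2) by field; rewrite Rpower_plus, Rpower_1, Rpower_sqrt; lra).
  pose proof (sqrt_lt_R0 p ltac:(lra)). pose proof (sqrt_lt_R0 (p - 2) ltac:(lra)).
  pose proof (sqrt_sqrt p ltac:(lra)). pose proof (sqrt_sqrt (p - 2) ltac:(lra)).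
  split.
  - apply Rdiv_lt_0_compat; [apply Rmult_lt_0_compat|]; lra.
  - field_simplify; [|lra].
    replace (sqrt (p - 2) ^ 2) with (p - 2) by (simpl; lra).
    replace (sqrt p ^ 2) with p by (simpl; lra). field. lra.
Qed.

(* With [K = p^(3/2) / sqrt (p - 2)], [4 balance = (p - 2) ((2 c + a p)^2 - (|a| K)^2)]
   and [2 c + a p = 2 m > 0]. *)
Lemma balance_zero_gt2 (p a c : R) : 2 < p -> 0 < hm p a 0 c ->
  balance p a c = 0 <-> 2 * c = Rabs a * (Rpower p (3 / 2) / sqrt (p - 2)) - a * p.
Proof.
  intros Hp Hm. destruct (Rpower_3_2_div_sqrt p Hp) as [HK0 HK].
  set (K := Rpower p (3 / 2) / sqrt (p - 2)) in *.
  assert (Hid : 4 * balance p a c = (p - 2) * ((2 * c + a * p) ^ 2 - (Rabs a * K) ^ 2)).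
  { rewrite Rpow_mult_distr, pow2_abs.
    transitivity ((p - 2) * (2 * c + a * p) ^ 2 - a ^ 2 * (K ^ 2 * (p - 2))); [|ring].
    rewrite HK. unfold balance, hm, hu. field. }
  unfold hm in Hm. pose proof (Rabs_pos a).
  assert (0 <= Rabs a * K) by (apply Rmult_le_pos; lra).
  split; intros Heq.
  - rewrite Heq, Rmult_0_r in Hid. symmetry in Hid.
    apply Rmult_integral in Hid as [|Hsq]; [lra|].
    assert (Hfac : (2 * c + a * p - Rabs a * K) * (2 * c + a * p + Rabs a * K) = 0) by nra.
    apply Rmult_integral in Hfac as [|]; lra.
  - replace (2 * c) with (Rabs a * K - a * p) in Hid by lra. nra.
Qed.

Theorem mainTheorem4 (p : R) (hp : 1 <= p) :
  (p <= 2 ->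
     forall a b c, In_U p a b c ->
       (is_critical (E p) a b c <->
          exists l, 0 < l /\ (a, b, c) = (0, 0, l))) /\
  (2 < p ->
     forall a b c, In_U p a b c ->
       (is_critical (E p) a b c <->
          exists l, 0 < l /\
            ((a, b, c) = (0, 0, l) \/
             (a, b, c) = (l, 0, l * (/ 2 * (Rpower p (3 / 2) / sqrt (p - 2) - p))) \/
             (a, b, c) = (- l, 0, l * (/ 2 * (Rpower p (3 / 2) / sqrt (p - 2) + p)))))).
Proof.
  split; intros Hp2 a b c HU; rewrite is_critical_E_iff by assumption;
    pose proof (proj1 (In_U_corners p a b c ltac:(lra)) HU) as (Hc & _).
  - split.
    + intros (-> & Ha).
      assert (a = 0) as -> by (destruct Ha; [|apply (balance_zero_le2 p _ c)]; lra).
      now exists c.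
    + intros (l & Hl & Heq). injection Heq as -> -> ->. now split; [|left].
  - set (K := Rpower p (3 / 2) / sqrt (p - 2)). split.
    + intros (-> & Ha). destruct (centre_dominates p a 0 c ltac:(lra) HU) as [Hm _].
      rewrite balance_zero_gt2 in Ha by assumption; fold K in Ha.
      destruct (Rtotal_order a 0) as [Hneg | [-> | Hpos]].
      * exists (- a). split; [lra|]. do 2 right. rewrite Ropp_involutive. f_equal.
        destruct Ha as [|Ha]; [lra|]. rewrite Rabs_left in Ha by lra. field_simplify; lra.
      * exists c. now split; [|left].
      * exists a. split; [lra|]. right; left. f_equal.
        destruct Ha as [|Ha]; [lra|]. rewrite Rabs_pos_eq in Ha by lra. field_simplify; lra.
    + intros (l & Hl & [Heq | [Heq | Heq]]); injection Heq as -> -> ->; split; auto; right;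
        destruct (centre_dominates p _ 0 _ ltac:(lra) HU) as [Hm _];
        apply balance_zero_gt2; auto; fold K.
      * rewrite Rabs_pos_eq by lra. field.
      * rewrite Rabs_left by lra. field.
Qed.
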